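(* $\mathrm{non}^{*}_{\omega}(\mathcal{S}pl)=\mathfrak{s}_{\omega}$.
   Context: For an infinite $A\subseteq\omega$, let $S(A)$ be the set of all $\sigma\in2^{<\omega}$ such that $\sigma$ is constant on $A\cap\mathrm{dom}(\sigma)$. The splitting ideal $\mathcal{S}pl$ is the ideal on $2^{<\omega}$ generated by the sets $S(A)$, $A\in[\omega]^{\omega}$. For an ideal $\mathcal{J}$ on a countable set $X$, $\mathrm{non}_{\omega}^*(\mathcal{J})=\min\{|\mathcal{F}|:\mathcal{F}\subseteq[X]^{\omega}$ and for every countable $\bar{A}\subseteq\mathcal{J}$ there is $F\in\mathcal{F}$ such that $A\cap F$ is finite for every $A\in\bar{A}\}$. A family $\mathcal{A}\subseteq[\omega]^{\omega}$ is $\omega$-splitting if for every countable $\{A_{n}:n\in\omega\}\subseteq[\omega]^{\omega}$ there is $A\in\mathcal{A}$ splitting every $A_{n}$ (i.e. $A_n\cap A$ and $A_n\setminus A$ are infinite). $\mathfrak{s}_{\omega}$ is the least size of an $\omega$-splitting family. *)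

From mathcomp Require Import all_boot.
From mathcomp Require Import boolp classical_sets cardinality.
Set Implicit Arguments. Unset Strict Implicit. Unset Printing Implicit Defensive.
Local Open Scope classical_set_scope.

(* 2^{<omega} is [seq bool]; dom(sigma) = {0, ..., size sigma - 1}. *)
Definition constant_on (A : set nat) (s : seq bool) : Prop :=
  forall i j, A i -> A j -> i < size s -> j < size s -> nth false s i = nth false s j.

Definition S_set (A : set nat) : set (seq bool) := [set s | constant_on A s].

(* The splitting ideal: the ideal on 2^{<omega} generated by the S(A),
   A infinite, i.e. the subsets of finite unions of generators. *)
Definition Spl : set (set (seq bool)) :=
  [set B | exists (n : nat) (Af : nat -> set nat),
      (forall i, i < n -> infinite_set (Af i)) /\
      B `<=` [set s | exists2 i, i < n & S_set (Af i) s]].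

Definition nonstar_omega_family (X : Type) (J : set (set X)) (F : set (set X)) : Prop :=
  (forall G, F G -> infinite_set G) /\
  (forall Abar : set (set X), countable Abar -> Abar `<=` J ->
     exists2 G, F G & forall A, Abar A -> finite_set (A `&` G)).

Definition splits (A B : set nat) : Prop :=
  infinite_set (B `&` A) /\ infinite_set (B `\` A).

Definition omega_splitting (Fa : set (set nat)) : Prop :=
  (forall A, Fa A -> infinite_set A) /\
  (forall An : nat -> set nat, (forall n, infinite_set (An n)) ->
     exists2 A, Fa A & forall n, splits A (An n)).

From mathcomp Require Import all_boot zify.
From mathcomp Require Import boolp classical_sets cardinality.
Local Open Scope classical_set_scope.
Local Open Scope card_scope.
Set Implicit Arguments. Unset Strict Implicit. Unset Printing Implicit Defensive.

(* Both inequalities are witnessed by explicit families of the same size.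

   Given an omega-splitting family H, take for each A in H the set of initial segments of
   its characteristic function.  A countable subfamily of Spl is covered by countably many
   sets S(B); if A splits all of these B, every long initial segment of A takes both values
   on B, so it meets each S(B) in a finite set.

   Given a non*_omega family F, Koenig's lemma turns each G in F into a comb: a branch y
   (the spine) and nodes tooth(t) in G agreeing with y below cut(t), of length less than
   cut(t+1).  If y is eventually constant on an infinite C and G is almost disjoint from
   the sets S(C minus k), then almost every span [cut(t), |tooth(t)|) meets C, so the union
   of the even spans splits C.  Either the spines form an omega-splitting family, or some
   sequence B_n defeats them; then for some n the even-span sets, pulled back along an
   enumeration e_n of B_n, form one.  Otherwise there are witnesses D_(n,m) against these,
   and a G in F almost disjoint from all S(e_n[D_(n,m)] minus k) has a spine that is
   eventually constant on some B_n, so its even spans split every e_n[D_(n,m)]: a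
   contradiction. *)

Lemma finite_natP (A : set nat) : finite_set A <-> exists N, A `<=` `I_N.
Proof.
split=> [/finite_fsetP[X ->]|[N AN]]; last exact: sub_finite_set AN (finite_II N).
exists (\max_(y <- finmap.enum_fset X) y).+1 => x /= Xx.
by rewrite ltnS (leq_bigmax_seq (F := id) x Xx).
Qed.

Lemma infinite_natP (A : set nat) : infinite_set A <-> forall N, exists2 x, A x & N <= x.
Proof.
rewrite finite_natP; split=> [nbd N|unbd [N AN]].
  apply: contrapT => /forall2NP nbig; apply: nbd; exists N => x Ax.
  by case: (nbig x) => // /negP; rewrite /= ltnNge.
by have [x /AN /=] := unbd N; rewrite ltnNge => /negP.
Qed.

Lemma infinite_setI_ge (C : set nat) k :
  infinite_set C -> infinite_set (C `&` [set i | k <= i]).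
Proof.
move=> Cinf; apply: infinite_setIl => //.
by apply: sub_finite_set (finite_II k) => i /= /negP; rewrite -ltnNge.
Qed.

Lemma infinite_set_enum (T : pointedType) (B : set T) :
  infinite_set B -> exists e : nat -> T, injective e /\ forall k, B (e k).
Proof.
move=> /infiniteP/pcard_leP/injfunPex[e eB einj].
by exists e; split=> [m n|k]; [apply: einj; rewrite inE | exact: eB].
Qed.

Lemma splits_infinite (A B : set nat) : splits A B -> infinite_set A.
Proof. by case=> BAinf _; apply: sub_infinite_set BAinf; exact: subIsetr. Qed.

Lemma splits_preimage (e : nat -> nat) (A D : set nat) :
  splits A (e @` D) -> splits (e @^-1` A) D.
Proof.
by case=> inA outA; split=> fin; [apply: inA | apply: outA];
  apply: sub_finite_set (finite_image e fin) => _ [[x Dx <-] Ax]; exists x.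
Qed.

Definition ev_const_on (y : nat -> bool) (B : set nat) : Prop :=
  exists k0 b, forall i, B i -> k0 <= i -> y i = b.

Lemma ev_const_onS (y : nat -> bool) (B C : set nat) :
  C `<=` B -> ev_const_on y B -> ev_const_on y C.
Proof. by move=> CB [k0 [b yb]]; exists k0, b => i /CB; exact: yb. Qed.

Lemma not_splits_ev_const (y : nat -> bool) (B : set nat) :
  ~ splits [set i | y i] B -> ev_const_on y B.
Proof.
move=> /not_andP[] /contrapT /finite_natP[N BN]; [exists N, false | exists N, true].
  by move=> i Bi Ni; apply/negbTE/negP => yi; move: (BN i (conj Bi yi)); rewrite /= ltnNge Ni.
by move=> i Bi Ni; apply: contrapT => nyi; move: (BN i (conj Bi nyi)); rewrite /= ltnNge Ni.
Qed.

Lemma omega_splitting_countable (H : set (set nat)) T (I : set T) (An : T -> set nat) :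
  omega_splitting H -> countable I -> (forall j, I j -> infinite_set (An j)) ->
  exists2 A, H A & forall j, I j -> splits A (An j).
Proof.
case=> _ Hsplit /pfcard_geP[->|/surjfunPex[g Ig]] Ainf.
  by have [A HA _] := Hsplit (fun=> setT) (fun=> infinite_nat); exists A.
have [k|A HA Asplit] := Hsplit (An \o g); first by apply: Ainf; rewrite Ig; exists k.
by exists A => // j; rewrite Ig => -[k _ <-]; exact: Asplit.
Qed.

Definition char_prefix (A : set nat) (n : nat) : seq bool := mkseq (fun i => `[< A i >]) n.

Definition branch_set (A : set nat) : set (seq bool) := range (char_prefix A).

Lemma branch_set_infinite (A : set nat) : infinite_set (branch_set A).
Proof.
rewrite /branch_set (eq_finite_set (inj_card_eq _)); first exact: infinite_nat.
by move=> m n _ _ /(congr1 size); rewrite !size_mkseq.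
Qed.

Lemma branch_set_S_finite (A B : set nat) :
  B `&` A !=set0 -> B `\` A !=set0 -> finite_set (S_set B `&` branch_set A).
Proof.
move=> [b1 [Bb1 Ab1]] [b2 [Bb2 nAb2]].
apply: sub_finite_set (finite_image (char_prefix A) (finite_II (maxn b1 b2).+1)).
move=> s [cst [n _ sn]]; rewrite -sn in cst *; exists n => //=; rewrite ltnNge; apply/negP => long.
have [lt1 lt2] : b1 < n /\ b2 < n by lia.
move: (cst b1 b2 Bb1 Bb2); rewrite size_mkseq !nth_mkseq // asboolT // => /(_ lt1 lt2).
by move/esym/asboolP.
Qed.

Lemma omega_splitting_nonstar (H : set (set nat)) :
  omega_splitting H -> nonstar_omega_family Spl (branch_set @` H).
Proof.
move=> Hsplit; split=> [_ [A _ <-]|Abar Abar_cnt AbarSpl]; first exact: branch_set_infinite.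
have /choice[d dP] : forall X, exists d : nat * (nat -> set nat), Spl X ->
    (forall i, i < d.1 -> infinite_set (d.2 i)) /\
    X `<=` [set s | exists2 i, i < d.1 & S_set (d.2 i) s].
  move=> X; case: (pselect (Spl X)) => [[n [Af XAf]]|nX]; first by exists (n, Af).
  by exists (0, fun=> setT).
pose I := [set p : set (seq bool) * nat | Abar p.1 /\ p.2 < (d p.1).1].
have I_cnt : countable I.
  apply: sub_countable (countableX Abar_cnt (countableP [set: nat])).
  by apply: subset_card_le => p [].
have [A HA Asplit] := omega_splitting_countable
  (An := fun p => (d p.1).2 p.2) Hsplit I_cnt
  (fun p '(conj Xp ip) => (dP _ (AbarSpl _ Xp)).1 _ ip).
exists (branch_set A) => [|X AbarX]; first by exists A.
have [_ Xcover] := dP X (AbarSpl X AbarX).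
apply: (@sub_finite_set _ _ (\bigcup_(i in `I_(d X).1) (S_set ((d X).2 i) `&` branch_set A))).
  by move=> s [/Xcover[i ilt Ss] bs]; exists i.
apply: bigcup_finite => [|i ilt]; first exact: finite_II.
have [/infinite_setN0 BA /infinite_setN0 BnA] := Asplit (X, i) (conj AbarX ilt).
exact: branch_set_S_finite.
Qed.

Lemma finite_seq_size_le (T : finType) (n : nat) : finite_set [set s : seq T | size s <= n].
Proof.
apply: (@sub_finite_set _ _ (\bigcup_(k in `I_n.+1) (val @` [set: k.-tuple T]))).
  by move=> s sn; exists (size s) => //=; exists (in_tuple s).
apply: bigcup_finite => [|k _]; first exact: finite_II.
exact/finite_image/finite_finset.
Qed.

Definition agrees (n : nat) (y : nat -> bool) (s : seq bool) : Prop :=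
  forall i, i < n -> i < size s -> nth false s i = y i.

Lemma agrees_rcons_split (u s : seq bool) : agrees (size u) (nth false u) s ->
  size s <= size u \/ exists b, agrees (size u).+1 (nth false (rcons u b)) s.
Proof.
move=> su; case: (leqP (size s) (size u)) => [|long]; [by left | right].
exists (nth false s (size u)) => i; rewrite ltnS leq_eqVlt => /orP[/eqP -> _|iu isz].
  by rewrite nth_rcons ltnn eqxx.
by rewrite nth_rcons iu; apply: su.
Qed.

Lemma infinite_agrees_rcons (G : set (seq bool)) (u : seq bool) :
  infinite_set (G `&` agrees (size u) (nth false u)) ->
  exists b, infinite_set (G `&` agrees (size u).+1 (nth false (rcons u b))).
Proof.
move=> inf; apply: contrapT => /forallNP /(_ _) /contrapT fin; apply: inf.
apply: (@sub_finite_set _ _ ([set s | size s <= size u] `|`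
  (G `&` agrees (size u).+1 (nth false (rcons u true))) `|`
  (G `&` agrees (size u).+1 (nth false (rcons u false))))).
  move=> s [Gs /agrees_rcons_split[|[[] su]]]; by [left; left | left; right | right].
by rewrite !finite_setU; split; [split|]; [exact: finite_seq_size_le | exact: fin | exact: fin].
Qed.

Fixpoint greedy_path (P : seq bool -> Prop) (n : nat) : seq bool :=
  if n is n'.+1 then let u := greedy_path P n' in rcons u `[< P (rcons u true) >] else [::].

Lemma size_greedy_path P n : size (greedy_path P n) = n.
Proof. by elim: n => //= n IH; rewrite size_rcons IH. Qed.

Lemma nth_greedy_path P n i :
  i < n -> nth false (greedy_path P n) i = nth false (greedy_path P i.+1) i.
Proof.
elim: n => // n IH; rewrite ltnS leq_eqVlt => /orP[/eqP -> //|lt_in].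
by rewrite /= nth_rcons size_greedy_path lt_in IH.
Qed.

Lemma konig (G : set (seq bool)) :
  infinite_set G -> exists y, forall n, infinite_set (G `&` agrees n y).
Proof.
move=> Ginf; pose P u := infinite_set (G `&` agrees (size u) (nth false u)).
pose p := greedy_path P.
have Pp n : P (p n).
  elim: n => [|n IH] /=.
    by apply: sub_infinite_set Ginf => s Gs; split=> // i.
  have [Ptrue|nPtrue] := pselect (P (rcons (p n) true)); first by rewrite /p /= asboolT.
  rewrite /p /= asboolF // /P size_rcons.
  by have [[] Pb] := infinite_agrees_rcons IH; [case: nPtrue; rewrite /P size_rcons|].
exists (fun i => nth false (p i.+1) i) => n.
apply: sub_infinite_set (Pp n) => s [Gs ps]; split=> // i ilt isz.
by rewrite ps ?size_greedy_path // nth_greedy_path.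
Qed.

Record comb := Comb { spine : nat -> bool; cut : nat -> nat; tooth : nat -> seq bool }.

Definition is_comb (G : set (seq bool)) (c : comb) : Prop :=
  [/\ forall t, G (tooth c t), forall t, agrees (cut c t) (spine c) (tooth c t),
      forall t, cut c t <= size (tooth c t) & forall t, size (tooth c t) < cut c t.+1].

Lemma infinite_comb (G : set (seq bool)) : infinite_set G -> exists c, is_comb G c.
Proof.
move=> /konig[y Gy].
have /choice[pick pickP] n : exists s, [/\ G s, agrees n y s & n <= size s].
  have /infinite_setN0[s [[Gs ys] /negP]] := infinite_setD (Gy n) (finite_seq_size_le bool n).
  by rewrite -ltnNge => /ltnW; exists s.
pose cut := fix cut t := if t is t'.+1 then (size (pick (cut t'))).+1 else 0.
exists (Comb y cut (fun t => pick (cut t))); split=> t; last by [].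
all: by case: (pickP (cut t)).
Qed.

Definition tooth_span (c : comb) (t : nat) : set nat := [set p | cut c t <= p < size (tooth c t)].

Definition even_teeth (c : comb) : set nat := \bigcup_(t in [set t | ~~ odd t]) tooth_span c t.

Section CombTeeth.
Variables (G : set (seq bool)) (c : comb).
Hypothesis combG : is_comb G c.

Lemma cut_lt_succ t : cut c t < cut c t.+1.
Proof. by case: combG => _ _ cut_size size_cut; exact: leq_ltn_trans (cut_size t) (size_cut t). Qed.

Lemma leq_cut t : t <= cut c t.
Proof. by elim: t => // t IH; exact: leq_ltn_trans IH (cut_lt_succ t). Qed.

Lemma tooth_inj : injective (tooth c).
Proof.
have size_lt_succ t : size (tooth c t) < size (tooth c t.+1).
  by case: combG => _ _ cut_size size_cut; exact: leq_trans (size_cut t) (cut_size t.+1).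
have size_mono := leq_mono (homo_ltn ltn_trans size_lt_succ).
by move=> t t' eq_tt'; apply/eqP; rewrite eqn_leq -(size_mono t) -(size_mono t') eq_tt' leqnn.
Qed.

Lemma tooth_span_inj t t' p : tooth_span c t p -> tooth_span c t' p -> t = t'.
Proof.
have below u v : u < v -> tooth_span c u p -> ~ tooth_span c v p.
  move=> lt_uv /andP[_ p_lt] /andP[cut_le _]; case: combG => _ _ _ size_cut.
  have cut_mono := leq_mono (homo_ltn ltn_trans cut_lt_succ).
  have : cut c u.+1 <= cut c v by rewrite cut_mono.
  by have := size_cut u; lia.
move=> pt pt'; case: (ltngtP t t') => // lt; first by case: (below _ _ lt pt pt').
by case: (below _ _ lt pt' pt).
Qed.

Lemma tooth_spans_meet (C : set nat) k0 b :
  (forall i, C i -> k0 <= i -> spine c i = b) ->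
  finite_set (S_set (C `&` [set i | k0 <= i]) `&` G) ->
  exists T, forall t, T <= t -> exists2 p, C p & tooth_span c t p.
Proof.
move=> spine_b fin; case: combG => Gtooth tooth_agrees _ _.
have /finite_natP[T hT] := finite_preimage (fun a b _ _ => @tooth_inj a b) fin.
exists T => t Tt; apply: contrapT => /forall2NP nmeet.
suff: t < T by rewrite ltnNge Tt.
apply: hT; split=> //= i j [Ci k0i] [Cj k0j] isz jsz.
have below q : C q -> q < size (tooth c t) -> q < cut c t.
  move=> Cq qsz; rewrite ltnNge; apply/negP => cut_le.
  by case: (nmeet q) => //; rewrite /tooth_span /= cut_le.
by rewrite !tooth_agrees ?below // !spine_b.
Qed.

Lemma even_teeth_splits (C : set nat) k0 b :
  (forall i, C i -> k0 <= i -> spine c i = b) ->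
  finite_set (S_set (C `&` [set i | k0 <= i]) `&` G) -> splits (even_teeth c) C.
Proof.
move=> spine_b fin; have [T meet] := tooth_spans_meet spine_b fin.
have far t p N : T + N <= t -> tooth_span c t p -> N <= p.
  by move=> tN /andP[cut_p _]; have := leq_cut t; lia.
split; apply/infinite_natP => N.
  have [|p Cp span] := meet (T + N).*2; first lia.
  exists p; last by apply: far span; lia.
  by split=> //; exists (T + N).*2; rewrite //= odd_double.
have [|p Cp span] := meet (T + N).*2.+1; first lia.
exists p; last by apply: far span; lia.
split=> // -[t even_t span_t]; move: even_t; rewrite /= (tooth_span_inj span_t span).
by rewrite /= odd_double.
Qed.

End CombTeeth.

Definition infinite_image T (f : T -> set nat) (F : set T) : set (set nat) :=
  (f @` F) `&` [set A | infinite_set A].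

Lemma infinite_image_card_le T (f : T -> set nat) (F : set T) : infinite_image f F #<= F.
Proof. exact: card_le_trans (subset_card_le (@subIsetl _ _ _)) (card_image_le f F). Qed.

Lemma not_omega_splitting (H : set (set nat)) :
  (forall A, H A -> infinite_set A) -> ~ omega_splitting H ->
  exists An : nat -> set nat, (forall n, infinite_set (An n)) /\
    forall A, H A -> exists n, ~ splits A (An n).
Proof.
move=> Hinf /not_andP[//|/existsNP[An /not_implyP[Aninf noA]]]; exists An; split=> // A HA.
by apply: contrapT => /forallNP splitsA; apply: noA; exists A => // n; apply: contrapT.
Qed.

Section NonstarComb.
Variables (F : set (set (seq bool))) (c : set (seq bool) -> comb).
Hypotheses (Fnonstar : nonstar_omega_family Spl F)
  (combF : forall G, infinite_set G -> is_comb G (c G)).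

Lemma nonstar_even_teeth_splits (I : countType) (C : I -> set nat) :
  (forall j, infinite_set (C j)) ->
  exists2 G, F G & forall j, ev_const_on (spine (c G)) (C j) -> splits (even_teeth (c G)) (C j).
Proof.
move=> Cinf; pose Abar := (fun p : I * nat => S_set (C p.1 `&` [set i | p.2 <= i])) @` setT.
have Abar_cnt : countable Abar by exact: card_le_trans (card_image_le _ _) (countableP _).
have AbarSpl : Abar `<=` Spl.
  move=> _ [[j k] _ <-]; exists 1, (fun=> C j `&` [set i | k <= i]).
  by split=> [i _|s Ss]; [exact: infinite_setI_ge | exists 0].
have [G FG Gdisj] := Fnonstar.2 Abar Abar_cnt AbarSpl.
exists G => // j [k0 [b spine_b]].
apply: (even_teeth_splits (combF (Fnonstar.1 G FG)) spine_b).
by apply: Gdisj; exists (j, k0).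
Qed.

Lemma nonstar_omega_splitting : exists2 H, omega_splitting H & H #<= F.
Proof.
pose Y G := [set i | spine (c G) i].
have [Ysplit|Y_nsplit] := pselect (omega_splitting (infinite_image Y F)).
  by exists (infinite_image Y F) => //; exact: infinite_image_card_le.
have [Bs [Bsinf Bs_witness]] := not_omega_splitting (fun _ => @proj2 _ _) Y_nsplit.
have /choice[e eP] n := infinite_set_enum (Bsinf n).
pose Z n G := e n @^-1` even_teeth (c G).
have [[n Zsplit]|/forallNP noZ] := pselect (exists n, omega_splitting (infinite_image (Z n) F)).
  by exists (infinite_image (Z n) F) => //; exact: infinite_image_card_le.
have /choice[D DP] n := not_omega_splitting (fun _ => @proj2 _ _) (noZ n).
have [|G FG Gsplits] := nonstar_even_teeth_splits (C := fun p : nat * nat => e p.1 @` D p.1 p.2).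
  move=> [n m]; rewrite /= (eq_finite_set (inj_card_eq _)); first exact: (DP n).1.
  by move=> ? ? _ _; exact: (eP n).1.
have [n YG_nsplit] : exists n, ~ splits (Y G) (Bs n).
  have [YGinf|YGfin] := pselect (infinite_set (Y G)).
    by apply: Bs_witness; split=> //; exists G.
  by exists 0 => /splits_infinite.
have ZG_splits m : splits (Z n G) (D n m).
  apply: splits_preimage; apply: (Gsplits (n, m)).
  by apply: ev_const_onS (not_splits_ev_const YG_nsplit) => _ [k _ <-]; exact: (eP n).2.
have [|m] := (DP n).2 (Z n G); last by case; exact: ZG_splits.
by split; [exists G | exact: splits_infinite (ZG_splits 0)].
Qed.

End NonstarComb.

Lemma comb_choice : exists c, forall G : set (seq bool), infinite_set G -> is_comb G (c G).
Proof.
suff /choice[c combG] G : exists c, infinite_set G -> is_comb G c by exists c.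
have [/infinite_comb[c Gc]|finG] := pselect (infinite_set G); first by exists c.
by exists (Comb (fun=> false) id (fun=> [::])) => /finG.
Qed.

Theorem mainTheorem15 :
  (forall F : set (set (seq bool)), nonstar_omega_family Spl F ->
     exists2 G : set (set nat), omega_splitting G & G #<= F) /\
  (forall G : set (set nat), omega_splitting G ->
     exists2 F : set (set (seq bool)), nonstar_omega_family Spl F & F #<= G).
Proof.
split=> [F Fnonstar|H Hsplit].
  have [c combF] := comb_choice.
  exact: nonstar_omega_splitting Fnonstar combF.
exists (branch_set @` H); first exact: omega_splitting_nonstar.
exact: card_image_le.
Qed.
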